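(* Let $X,Y$ be positive words and suppose $Xa_{ts}\doteq Ya_{rq}$ (with $n\ge t>s\ge1$, $n\ge r>q\ge1$). Then: (I) If $t=r$ and $s=q$, then $X\doteq Y$. (II) (i) If $t=r$ and $q<s$, then $X\doteq Za_{tq}$, $Y\doteq Za_{sq}$ for some positive word $Z$; (ii) if $t=r$ and $s<q$, then $X\doteq Za_{qs}$, $Y\doteq Za_{ts}$; (iii) if $t=q$, then $X\doteq Za_{rt}$, $Y\doteq Za_{ts}$; (iv) if $s=r$, then $X\doteq Za_{tq}$, $Y\doteq Za_{ts}$; (v) if $s=q$ and $r<t$, then $X\doteq Za_{rs}$, $Y\doteq Za_{tr}$; (vi) if $s=q$ and $t<r$, then $X\doteq Za_{rt}$, $Y\doteq Za_{ts}$; in each case for some positive word $Z$. (III) If $(t-r)(t-q)(s-r)(s-q)>0$, then $X\doteq Za_{rq}$ and $Y\doteq Za_{ts}$ for some positive word $Z$. (IV) (i) If $q<s<r<t$, then $X\doteq Za_{tq}a_{rs}$ and $Y\doteq Za_{tr}a_{sq}$ for some positive word $Z$; (ii) if $s<q<t<r$, then $X\doteq Za_{rt}a_{qs}$ and $Y\doteq Za_{tq}a_{rs}$ for some positive word $Z$.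
   Context: $B_n$ is the $n$-string braid group with band generators $a_{ts}$ ($n\ge t>s\ge1$), where $a_{ts}=(\sigma_{t-1}\cdots\sigma_{s+1})\sigma_s(\sigma_{s+1}^{-1}\cdots\sigma_{t-1}^{-1})$. The band relations are: (R1) $a_{ts}a_{rq}=a_{rq}a_{ts}$ if $(t-r)(t-q)(s-r)(s-q)>0$; (R2) $a_{ts}a_{sr}=a_{tr}a_{ts}=a_{sr}a_{tr}$ for $n\ge t>s>r\ge1$. A positive word is a word in positive powers of the $a_{ts}$. Two positive words $X,Y$ are positively equivalent, $X\doteq Y$, if one can be transformed into the other by a finite sequence of single direct applications of relations (R1), (R2) to subwords. *)

From mathcomp Require Import all_boot all_order all_algebra.
Set Implicit Arguments. Unset Strict Implicit. Unset Printing Implicit Defensive.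
Import Order.TTheory GRing.Theory Num.Theory.

Definition gen := (nat * nat)%type.
Definition a (t s : nat) : gen := (t, s).

Definition valid_gen (n : nat) (g : gen) : bool := (0 < g.2) && (g.2 < g.1) && (g.1 <= n).

Definition pword (n : nat) (w : seq gen) : bool := all (valid_gen n) w.

Definition commute_cond (t s r q : nat) : bool :=
  (0 < ((t%:Z - r%:Z) * (t%:Z - q%:Z) * (s%:Z - r%:Z) * (s%:Z - q%:Z)))%R.

Inductive band_rel (n : nat) : seq gen -> seq gen -> Prop :=
| R1 t s r q : valid_gen n (a t s) -> valid_gen n (a r q) -> commute_cond t s r q ->
    band_rel n [:: a t s; a r q] [:: a r q; a t s]
| R2a t s r : t <= n -> s < t -> r < s -> 1 <= r ->
    band_rel n [:: a t s; a s r] [:: a t r; a t s]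
| R2b t s r : t <= n -> s < t -> r < s -> 1 <= r ->
    band_rel n [:: a t r; a t s] [:: a s r; a t r]
| R2c t s r : t <= n -> s < t -> r < s -> 1 <= r ->
    band_rel n [:: a t s; a s r] [:: a s r; a t r].

Inductive pstep (n : nat) : seq gen -> seq gen -> Prop :=
| pstep_fwd u v l r : band_rel n l r -> pstep n (u ++ l ++ v) (u ++ r ++ v)
| pstep_bwd u v l r : band_rel n l r -> pstep n (u ++ r ++ v) (u ++ l ++ v).

Inductive peq (n : nat) : seq gen -> seq gen -> Prop :=
| peq_refl w : peq n w w
| peq_step w1 w2 w3 : pstep n w1 w2 -> peq n w2 w3 -> peq n w1 w3.

Definition common_prefix (n : nat) (X Y A B : seq gen) : Prop :=
  exists Z : seq gen, pword n Z /\ peq n X (Z ++ A) /\ peq n Y (Z ++ B).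

(* Let [lcompl a b] be the word prescribed by the theorem in front of [a] (empty when
   [a = b]), so that [lcompl a b · a ≐ lcompl b a · b] by the band relations.  The theorem
   says that [X a ≐ Y b] forces [X ≐ Z lcompl a b] and [Y ≐ Z lcompl b a].  This is
   proved by induction on the length of [X] and then along the chain of elementary
   steps from [X a] to [Y b]: a step inside [X] is harmless, and a step that replaces the
   last letter [a] by [c] is absorbed by the cube condition for [(a, b, c)], once the
   complements of [c] have been reversed against each other using the induction
   hypothesis.  The cube condition only depends on the relative order of the at most
   six indices of [a], [b], [c]; it is verified by computation in [B_6] and transported
   along order-preserving embeddings of the indices. *)

From mathcomp Require Import all_boot all_order all_algebra.
From mathcomp Require Import zify.
Set Implicit Arguments. Unset Strict Implicit. Unset Printing Implicit Defensive.
Import Order.TTheory GRing.Theory Num.Theory.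

(** * Positive equivalence *)

Section PositiveEquivalence.
Variable n : nat.

Lemma pstep_sym w1 w2 : pstep n w1 w2 -> pstep n w2 w1.
Proof. by case=> u v l r H; [apply: pstep_bwd | apply: pstep_fwd]. Qed.

Lemma pstep_peq w1 w2 : pstep n w1 w2 -> peq n w1 w2.
Proof. by move=> H; apply: peq_step H (peq_refl _ _). Qed.

Lemma peq_trans w1 w2 w3 : peq n w1 w2 -> peq n w2 w3 -> peq n w1 w3.
Proof. by elim=> // x y z H _ IH /IH; apply: peq_step. Qed.

Lemma peq_sym w1 w2 : peq n w1 w2 -> peq n w2 w1.
Proof.
elim=> [w|x y z H _ IH]; first exact: peq_refl.
by apply: peq_trans IH (pstep_peq (pstep_sym H)).
Qed.

Lemma pstep_cat p s w1 w2 : pstep n w1 w2 -> pstep n (p ++ w1 ++ s) (p ++ w2 ++ s).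
Proof.
have E u l v : p ++ (u ++ l ++ v) ++ s = (p ++ u) ++ l ++ (v ++ s) by rewrite !catA.
by case=> u v l r H; rewrite !E; [apply: pstep_fwd | apply: pstep_bwd].
Qed.

Lemma peq_cat p s w1 w2 : peq n w1 w2 -> peq n (p ++ w1 ++ s) (p ++ w2 ++ s).
Proof.
elim=> [w|x y z H _ IH]; first exact: peq_refl.
by apply: peq_step IH; apply: pstep_cat.
Qed.

Lemma peq_catl p w1 w2 : peq n w1 w2 -> peq n (p ++ w1) (p ++ w2).
Proof. by move=> /(peq_cat p [::]); rewrite !cats0. Qed.

Lemma peq_catr s w1 w2 : peq n w1 w2 -> peq n (w1 ++ s) (w2 ++ s).
Proof. exact: peq_cat [::] s w1 w2. Qed.

Lemma band_rel_pword l r : band_rel n l r -> pword n l && pword n r.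
Proof.
rewrite /pword /valid_gen; case=> /=.
- by move=> t s r' q /andP[/andP[-> ->] ->] /andP[/andP[-> ->] ->].
all: move=> *; rewrite !andbT; repeat (apply/andP; split); lia.
Qed.

Lemma pstep_size w1 w2 : pstep n w1 w2 -> size w1 = size w2.
Proof. by case=> u v l r H; rewrite !size_cat; case: H. Qed.

Lemma peq_size w1 w2 : peq n w1 w2 -> size w1 = size w2.
Proof. by elim=> // x y z /pstep_size ->. Qed.

Lemma pword_cat u v : pword n (u ++ v) = pword n u && pword n v.
Proof. exact: all_cat. Qed.

Lemma pword_rcons u x : pword n (rcons u x) = pword n u && valid_gen n x.
Proof. by rewrite -cats1 pword_cat /pword /= andbT. Qed.

Lemma pstep_pword w1 w2 : pstep n w1 w2 -> pword n w1 = pword n w2.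
Proof.
by case=> u v l r /band_rel_pword /andP[Hl Hr]; rewrite !pword_cat Hl Hr.
Qed.

Lemma peq_pword w1 w2 : peq n w1 w2 -> pword n w1 = pword n w2.
Proof. by elim=> // x y z /pstep_pword ->. Qed.

End PositiveEquivalence.

(** * Left complements of band generators *)

(* The product of the four differences is positive iff none vanishes and an even
   number of them is negative. *)
Definition bands_commute (t s r q : nat) : bool :=
  [&& t != r, t != q, s != r, s != q & ~~ ((t < r) (+) (t < q) (+) (s < r) (+) (s < q))].

Lemma sgz_subn (x y : nat) :
  sgz (x%:Z - y%:Z) = (if (x < y)%N then -1 else if x == y then 0 else 1)%R.
Proof.
case: ltngtP => h.
- by apply: ltr0_sgz; rewrite subr_lt0 ltz_nat.
- by apply: gtr0_sgz; rewrite subr_gt0 ltz_nat.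
- by rewrite h subrr.
Qed.

Lemma commute_condE t s r q : commute_cond t s r q = bands_commute t s r q.
Proof.
rewrite /commute_cond -sgz_gt0 !sgzM !sgz_subn /bands_commute.
by case: (ltngtP t r); case: (ltngtP t q); case: (ltngtP s r); case: (ltngtP s q).
Qed.

Lemma bands_commuteC t s r q : bands_commute r q t s = bands_commute t s r q.
Proof.
rewrite /bands_commute.
by case: (ltngtP t r); case: (ltngtP t q); case: (ltngtP s r); case: (ltngtP s q).
Qed.

(* The words of the theorem, so that [lcompl x y · x ≐ lcompl y x · y]; the last
   branch is never reached by band generators. *)
Definition lcompl (x y : gen) : seq gen :=
  let: (t, s) := x in let: (r, q) := y in
  if (t == r) && (s == q) then [::]
  else if bands_commute t s r q then [:: y]
  else if t == r then (if q < s then [:: (t, q)] else [:: (q, s)])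
  else if t == q then [:: (r, t)]
  else if s == r then [:: (t, q)]
  else if s == q then (if r < t then [:: (r, s)] else [:: (r, t)])
  else if [&& q < s, s < r & r < t] then [:: (t, q); (r, s)]
  else if [&& s < q, q < t & t < r] then [:: (r, t); (q, s)]
  else [::].

Lemma lcompl_id x : lcompl x x = [::].
Proof. by case: x => t s; rewrite /= !eqxx. Qed.

Lemma lcompl_commute t s r q :
  bands_commute t s r q -> lcompl (t, s) (r, q) = [:: (r, q)].
Proof. by move=> h /=; rewrite h; case: eqP h => // ->; rewrite /bands_commute eqxx. Qed.

Ltac lcompl_compute :=
  rewrite /lcompl /bands_commute /valid_gen /=; repeat (case: ifP => /=); try done; intros; lia.

Lemma band_rel_lcompl n l r : band_rel n l r -> exists x1 x2 y1 y2,
  [/\ l = [:: x1; x2], r = [:: y1; y2], lcompl x2 y2 = [:: x1], lcompl y2 x2 = [:: y1]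
    & valid_gen n x2 && valid_gen n y2].
Proof.
case=> [t s r' q Vts Vrq | t s r' | t s r' | t s r'].
- rewrite commute_condE => h; exists (t, s), (r', q), (r', q), (t, s).
  by rewrite !lcompl_commute // ?Vts ?Vrq // bands_commuteC.
- by exists (t, s), (s, r'), (t, r'), (t, s); split; lcompl_compute.
- by exists (t, r'), (t, s), (s, r'), (t, r'); split; lcompl_compute.
- by exists (t, s), (s, r'), (s, r'), (t, r'); split; lcompl_compute.
Qed.

(* Left subword reversing of [U] against [W], starting from their last letters, aiming
   at [(U', W')] with [U' U ≐ W' W]; [fuel] bounds the recursion. *)
Fixpoint lcompl_words (fuel : nat) (U W : seq gen) : option (seq gen * seq gen) :=
  if fuel is fuel'.+1 then
    match U, W with
    | [::], _ => Some (W, [::])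
    | _, [::] => Some ([::], U)
    | u :: us, w :: ws =>
      let x := last u us in let y := last w ws in
      if lcompl_words fuel' (belast u us) (lcompl x y) is Some (A, B) then
        if lcompl_words fuel' (belast w ws) (B ++ lcompl y x) is Some (C, D) then
          Some (D ++ A, C)
        else None
      else None
    end
  else None.

Definition lcompl_upto (n N : nat) : Prop :=
  forall X Y a b, size X < N -> pword n (rcons X a) -> peq n (rcons X a) (rcons Y b) ->
  exists Z, peq n X (Z ++ lcompl a b) /\ peq n Y (Z ++ lcompl b a).

Lemma lcompl_words_correct n N : lcompl_upto n N ->
  forall fuel U W Z1 Z2 U' W',
  size (Z1 ++ U) <= N -> pword n (Z1 ++ U) -> peq n (Z1 ++ U) (Z2 ++ W) ->
  lcompl_words fuel U W = Some (U', W') ->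
  exists Z, peq n Z1 (Z ++ U') /\ peq n Z2 (Z ++ W').
Proof.
move=> HN; elim=> [//|fuel IH] [|u us] W Z1 Z2 U' W' HU HpU HUW /=.
  by case=> <- <-; exists Z2; rewrite !cats0 in HUW *; split=> //; apply: peq_refl.
case: W HUW => [|w ws] HUW.
  by case=> <- <-; exists Z1; rewrite !cats0 in HUW *; split; [apply: peq_refl | apply: peq_sym].
set x := last u us; set U0 := belast u us; set y := last w ws; set W0 := belast w ws.
have EU : Z1 ++ u :: us = rcons (Z1 ++ U0) x by rewrite rcons_cat -lastI.
have EW : Z2 ++ w :: ws = rcons (Z2 ++ W0) y by rewrite rcons_cat -lastI.
rewrite EU EW in HUW; rewrite EU size_rcons in HU; rewrite EU in HpU.
have [Z4 [H1 H2]] := HN _ _ _ _ HU HpU HUW.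
have HpU0 : pword n (Z1 ++ U0) by move: HpU; rewrite pword_rcons => /andP[].
have HpW0 : pword n (Z2 ++ W0).
  by move: HpU; rewrite (peq_pword HUW) pword_rcons => /andP[].
have HW0 : size (Z2 ++ W0) <= N.
  by move: (peq_size HUW) HU; rewrite !size_rcons => -[->] /ltnW.
case E1: lcompl_words => [[A B]|] //.
have [Z5 [H3 H4]] := IH _ _ _ _ _ _ (ltnW HU) HpU0 H1 E1.
case E2: lcompl_words => [[C D]|] // [<- <-].
have H5 : peq n (Z2 ++ W0) (Z5 ++ B ++ lcompl y x).
  by apply: peq_trans H2 _; rewrite catA; apply: peq_catr.
have [Z6 [H6 H7]] := IH _ _ _ _ _ _ HW0 HpW0 H5 E2.
exists Z6; split=> //.
by apply: peq_trans H3 _; rewrite catA; apply: peq_catr.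
Qed.

(** * The cube condition, checked by computation *)

Definition band_relb (n : nat) (l r : seq gen) : bool :=
  if (l, r) is ([:: x1; x2], [:: y1; y2]) then
    let: (t, s) := x1 in let: (t', s') := x2 in
    [|| [&& y1 == x2, y2 == x1, valid_gen n x1, valid_gen n x2 & bands_commute t s t' s'],
        [&& t' == s, y1 == (t, s'), y2 == x1, t <= n, s < t, s' < s & 0 < s'],
        [&& t' == t, y1 == (s', s), y2 == x1, t <= n, s' < t, s < s' & 0 < s]
      | [&& t' == s, y1 == x2, y2 == (t, s'), t <= n, s < t, s' < s & 0 < s']]
  else false.

Lemma band_relb_sound n l r : band_relb n l r -> band_rel n l r.
Proof.
case: l => [|[t s] [|[t' s'] [|? ?]]] //; case: r => [|y1 [|y2 [|? ?]]] //= /or4P[].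
- by case/and5P=> /eqP -> /eqP -> *; apply: R1; rewrite // commute_condE.
- by case/and5P=> /eqP -> /eqP -> /eqP -> ? /and3P[]; apply: R2a.
- by case/and5P=> /eqP -> /eqP -> /eqP -> ? /and3P[]; apply: R2b.
- by case/and5P=> /eqP -> /eqP -> /eqP -> ? /and3P[]; apply: R2c.
Qed.

(* Every relation with [[:: x; y]] as one side has one of these as its other side. *)
Definition rel_candidates (x y : gen) : seq (seq gen) :=
  [:: [:: y; x]; [:: (x.1, y.2); x]; [:: y; (x.1, y.2)]; [:: y; (y.2, x.2)];
      [:: (y.2, x.2); x]; [:: y; (y.1, x.1)]; [:: (y.1, x.1); x]].

Definition psteps (n : nat) (u : seq gen) : seq (seq gen) :=
  flatten [seq [seq take i u ++ c ++ drop i.+2 u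
               | c <- rel_candidates (nth (0, 0) u i) (nth (0, 0) u i.+1)
               & band_relb n [:: nth (0, 0) u i; nth (0, 0) u i.+1] c
                 || band_relb n c [:: nth (0, 0) u i; nth (0, 0) u i.+1]]
          | i <- iota 0 (size u).-1].

Lemma psteps_sound n u v : v \in psteps n u -> pstep n u v.
Proof.
case/flattenP=> w /mapP[i]; rewrite mem_iota => /andP[_ Hi] -> /mapP[c].
have Hi1 : i.+1 < size u by move: Hi; case: (size u).
have Eu : u = take i u ++ [:: nth (0, 0) u i; nth (0, 0) u i.+1] ++ drop i.+2 u.
  by rewrite -{1}(cat_take_drop i u) (drop_nth (0, 0)) 1?ltnW // (drop_nth (0, 0)).
rewrite mem_filter => /andP[/orP[] /band_relb_sound Hc _ ->]; rewrite {1}Eu.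
- exact: pstep_fwd.
- exact: pstep_bwd.
Qed.

Fixpoint peq_closure_from (n fuel : nat) (S F : seq (seq gen)) : seq (seq gen) :=
  if fuel is fuel'.+1 then
    let N := [seq w <- undup (flatten (map (psteps n) F)) | w \notin S] in
    if N is [::] then S else peq_closure_from n fuel' (N ++ S) N
  else S.

Definition peq_closure (n : nat) (w : seq gen) := peq_closure_from n 20 [:: w] [:: w].

Lemma peq_closure_from_sound n w0 fuel S F :
  {in S, forall w, peq n w0 w} -> {in F, forall w, peq n w0 w} ->
  {in peq_closure_from n fuel S F, forall w, peq n w0 w}.
Proof.
elim: fuel S F => [|fuel IH] S F HS HF //=.
set N := [seq _ <- _ | _].
have HN : {in N, forall w, peq n w0 w}.
  move=> w; rewrite mem_filter mem_undup => /andP[_ /flattenP[_ /mapP[u Hu ->]]].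
  by move/psteps_sound/pstep_peq; apply: peq_trans (HF u Hu).
case: N HN => [//|w N] HN; apply: IH => // v.
by rewrite mem_cat => /orP[]; [apply: HN | apply: HS].
Qed.

Lemma peq_closure_sound n w0 w : w \in peq_closure n w0 -> peq n w0 w.
Proof. by apply: peq_closure_from_sound => v; rewrite inE => /eqP ->; apply: peq_refl. Qed.

(* The cube condition for [(a, b, c)]: reversing the complements of [c] by [a] and
   by [b] closes up to the complements of [a] and [b]. *)
Definition cube_condition (n : nat) (a b c : gen) : Prop :=
  exists U W Z, [/\ lcompl_words 10 (lcompl c a) (lcompl c b) = Some (U, W),
    peq n (U ++ lcompl a c) (Z ++ lcompl a b) & peq n (W ++ lcompl b c) (Z ++ lcompl b a)].

Definition cube_check (n : nat) (a b c : gen) : bool :=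
  if lcompl_words 10 (lcompl c a) (lcompl c b) is Some (U, W) then
    let m := size (lcompl a b) in let CW := peq_closure n (W ++ lcompl b c) in
    has (fun w => (drop (size w - m) w == lcompl a b) && (take (size w - m) w ++ lcompl b a \in CW))
        (peq_closure n (U ++ lcompl a c))
  else false.

Lemma cube_check_sound n a b c : cube_check n a b c -> cube_condition n a b c.
Proof.
rewrite /cube_check; case E: lcompl_words => [[U W]|] //.
case/hasP=> w /peq_closure_sound Hw /andP[/eqP Hd /peq_closure_sound Ht].
exists U, W, (take (size w - size (lcompl a b)) w); split=> //.
by set Z := take _ w; rewrite -Hd cat_take_drop.
Qed.

Definition gens_upto (k : nat) : seq gen :=
  [seq g <- [seq (i, j) | i <- iota 0 k.+1, j <- iota 0 k.+1] | valid_gen k g].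

Lemma gens_uptoP k g : valid_gen k g -> g \in gens_upto k.
Proof.
case: g => i j Hg; rewrite mem_filter Hg andTb.
have [Hi Hj] : i < k.+1 /\ j < k.+1 by move: Hg; rewrite /valid_gen /=; lia.
by apply: (allpairs_f (fun x y => (x, y))); rewrite mem_iota.
Qed.

Definition cube_checks (k : nat) : bool :=
  all (fun a => all (fun b => all (fun c => (size (lcompl a c) != 1) || cube_check k a b c)
    (gens_upto k)) (gens_upto k)) (gens_upto k).

Lemma cube_checks_small : all cube_checks (iota 0 7).
Proof. by vm_compute. Qed.

Lemma cube_condition_small k a b c : k <= 6 ->
  valid_gen k a -> valid_gen k b -> valid_gen k c -> size (lcompl a c) = 1 ->
  cube_condition k a b c.
Proof.
move=> hk /gens_uptoP ha /gens_uptoP hb /gens_uptoP hc hac; apply: cube_check_sound.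
have /allP /(_ k) := cube_checks_small; rewrite mem_iota ltnS hk => /(_ isT).
by move=> /allP /(_ a ha) /allP /(_ b hb) /allP /(_ c hc); rewrite hac.
Qed.

(** * Order-preserving embeddings of the indices *)

Definition gmap (f : nat -> nat) (g : gen) : gen := (f g.1, f g.2).
Arguments gmap : simpl never.

Section OrderEmbedding.
Variable f : nat -> nat.
Hypothesis f_ltn : {mono f : x y / x < y}.

Lemma mono_leq : {mono f : x y / x <= y}.
Proof. by move=> x y; rewrite leqNgt f_ltn -leqNgt. Qed.

Lemma mono_eq : {mono f : x y / x == y}.
Proof. by move=> x y; rewrite !eqn_leq !mono_leq. Qed.

Lemma bands_commute_gmap t s r q :
  bands_commute (f t) (f s) (f r) (f q) = bands_commute t s r q.
Proof. by rewrite /bands_commute !mono_eq !f_ltn. Qed.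

Lemma lcompl_gmap x y : lcompl (gmap f x) (gmap f y) = map (gmap f) (lcompl x y).
Proof.
case: x => t s; case: y => r q; rewrite /gmap /= bands_commute_gmap !mono_eq !f_ltn.
by repeat case: ifP.
Qed.

Lemma lcompl_words_gmap fuel U W : lcompl_words fuel (map (gmap f) U) (map (gmap f) W) =
  omap (fun p => (map (gmap f) p.1, map (gmap f) p.2)) (lcompl_words fuel U W).
Proof.
elim: fuel U W => [//|fuel IH] [|u us] [|w ws] //=.
rewrite !last_map !belast_map !lcompl_gmap IH.
case: lcompl_words => [[A B]|] //=.
rewrite -map_cat IH.
by case: lcompl_words => [[C D]|] //=; rewrite map_cat.
Qed.

Variables k n : nat.
Hypothesis fk_le : f k <= n.

Lemma mono_le_bound t : t <= k -> f t <= n.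
Proof. by move=> h; apply: leq_trans fk_le; rewrite mono_leq. Qed.

Lemma mono_gt0 x : 0 < x -> 0 < f x.
Proof. by move=> h; apply: leq_ltn_trans (_ : f 0 < f x); rewrite ?f_ltn. Qed.

Lemma valid_gen_gmap g : valid_gen k g -> valid_gen n (gmap f g).
Proof.
case: g => t s; rewrite /valid_gen /gmap /= f_ltn.
by case/andP=> /andP[/mono_gt0 -> ->] /mono_le_bound.
Qed.

Lemma band_rel_gmap l r : band_rel k l r -> band_rel n (map (gmap f) l) (map (gmap f) r).
Proof.
case=> [t s r' q Vts Vrq | t s r' | t s r' | t s r'] /=.
- rewrite !commute_condE -bands_commute_gmap => h.
  by apply: R1; rewrite ?commute_condE //; apply: valid_gen_gmap.
all: by move=> h1 h2 h3 h4; constructor; rewrite ?f_ltn // ?mono_gt0 // mono_le_bound.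
Qed.

Lemma peq_gmap w1 w2 : peq k w1 w2 -> peq n (map (gmap f) w1) (map (gmap f) w2).
Proof.
elim=> [w|x y z H _ IH]; first exact: peq_refl.
apply: peq_step IH; case: H => u v l r /band_rel_gmap H; rewrite !map_cat.
- exact: pstep_fwd.
- exact: pstep_bwd.
Qed.

Lemma cube_condition_gmap a b c :
  cube_condition k a b c -> cube_condition n (gmap f a) (gmap f b) (gmap f c).
Proof.
case=> U [W [Z [E HU HW]]]; exists (map (gmap f) U), (map (gmap f) W), (map (gmap f) Z).
by rewrite !lcompl_gmap lcompl_words_gmap E -!map_cat; split=> //; apply: peq_gmap.
Qed.

End OrderEmbedding.

Definition rank_embed (L : seq nat) (i : nat) : nat :=
  if i == 0 then 0 else if i <= size L then nth 0 L i.-1 else last 0 L + (i - size L).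

Lemma rank_embed_ltnS L : sorted ltn L -> all (leq 1) L ->
  forall i, rank_embed L i < rank_embed L i.+1.
Proof.
move=> Ls Lpos [|i]; rewrite /rank_embed /=.
  by case: L Ls Lpos => [|x L] //= _ /andP[].
have [iL|Li] := leqP i.+2 (size L).
  rewrite (ltnW iL); apply: (sorted_ltn_nth ltn_trans 0 Ls); rewrite ?inE //; lia.
have [iL|Li'] := leqP i.+1 (size L); last lia.
have eL : size L = i.+1 by lia.
by rewrite -nth_last eL /=; lia.
Qed.

Lemma order_abstraction n (S : seq nat) : all (fun x => 0 < x <= n) S ->
  exists k (f g : nat -> nat), [/\ k <= size S, f k <= n, {mono f : x y / x < y}
    & {in S, forall x, f (g x) = x /\ 0 < g x <= k}].
Proof.
move=> Sn; set L := sort leq (undup S).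
have memL x : (x \in L) = (x \in S) by rewrite mem_sort mem_undup.
have Ls : sorted ltn L.
  by rewrite ltn_sorted_uniq_leq sort_uniq undup_uniq sort_sorted //; apply: leq_total.
have Lpos : all (leq 1) L by apply/allP=> x; rewrite memL => /(allP Sn) /andP[].
have embed_leq : {mono rank_embed L : x y / x <= y}.
  by apply: leq_mono; apply: homo_ltn ltn_trans (rank_embed_ltnS Ls Lpos).
exists (size L), (rank_embed L), (fun x => (index x L).+1); split.
- by rewrite size_sort (leq_trans (size_undup _)).
- rewrite /rank_embed leqnn; case: posnP => // L0.
  have : nth 0 L (size L).-1 \in L by rewrite mem_nth // prednK.
  by rewrite memL => /(allP Sn) /andP[].
- by move=> x y; rewrite !ltnNge embed_leq.
- by move=> x Sx; rewrite /rank_embed /= index_mem memL Sx nth_index ?memL.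
Qed.

Lemma gens_abstraction n (gs : seq gen) : all (valid_gen n) gs ->
  exists k f (gs' : seq gen), [/\ k <= (size gs).*2, f k <= n, {mono f : x y / x < y},
    all (valid_gen k) gs' & map (gmap f) gs' = gs].
Proof.
move=> Vgs; set S := flatten [seq [:: g.1; g.2] | g <- gs].
have memS g : g \in gs -> g.1 \in S /\ g.2 \in S.
  by move=> gs_g; split; apply/flattenP; exists [:: g.1; g.2]; rewrite ?inE ?eqxx ?orbT //;
     apply: map_f.
have Sn : all (fun x => 0 < x <= n) S.
  apply/allP=> x /flattenP[_ /mapP[g /(allP Vgs) + ->]].
  by rewrite /valid_gen !inE => Vg /orP[] /eqP ->; lia.
have [k [f [h [Sk fk f_ltn Hh]]]] := order_abstraction Sn.
have sizeS : size S = (size gs).*2 by rewrite /S; elim: (gs) => //= g gs' ->.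
exists k, f, (map (gmap h) gs); split; rewrite -?sizeS //.
- apply/allP=> _ /mapP[g gs_g ->]; have [S1 S2] := memS g gs_g.
  have [e1 /andP[_ h1k]] := Hh _ S1; have [e2 /andP[h2 _]] := Hh _ S2.
  move/allP: Vgs => /(_ g gs_g); rewrite /valid_gen /= h2 h1k andbT -(f_ltn (h g.2)) e1 e2.
  by case/andP=> /andP[].
- rewrite -map_comp -[RHS]map_id; apply/eq_in_map=> g /memS[S1 S2] /=.
  by rewrite /gmap /= (Hh _ S1).1 (Hh _ S2).1 -surjective_pairing.
Qed.

Lemma cube_condition_holds n a b c : valid_gen n a -> valid_gen n b -> valid_gen n c ->
  size (lcompl a c) = 1 -> cube_condition n a b c.
Proof.
move=> Va Vb Vc.
have /gens_abstraction[k [f [gs [k6 fk f_ltn]]]] : all (valid_gen n) [:: a; b; c].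
  by rewrite /= Va Vb Vc.
case: gs => [|a' [|b' [|c' [|]]]] //= /and4P[Va' Vb' Vc' _] [<- <- <-].
rewrite lcompl_gmap // size_map => sac.
by apply: (cube_condition_gmap f_ltn fk); apply: cube_condition_small.
Qed.

(** * The induction *)

Definition rel_at_end (n : nat) (X : seq gen) (a : gen) (V : seq gen) (c : gen) : Prop :=
  exists U x y, [/\ X = rcons U x, V = rcons U y, lcompl a c = [:: x], lcompl c a = [:: y]
    & valid_gen n a && valid_gen n c].

Lemma rcons_pstep_cases n X a u v x1 x2 y1 y2 :
  lcompl x2 y2 = [:: x1] -> lcompl y2 x2 = [:: y1] -> valid_gen n x2 && valid_gen n y2 ->
  (forall u v, pstep n (u ++ [:: x1; x2] ++ v) (u ++ [:: y1; y2] ++ v)) ->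
  rcons X a = u ++ [:: x1; x2] ++ v ->
  exists V c, u ++ [:: y1; y2] ++ v = rcons V c /\
    (c = a /\ pstep n X V \/ rel_at_end n X a V c).
Proof.
have pair_rcons w z1 z2 : w ++ [:: z1; z2] = rcons (rcons w z1) z2.
  by rewrite -!cats1 -catA.
move=> E1 E2 V12 Hstep; case: (lastP v) => [|v' z].
  rewrite !cats0 !pair_rcons => /eqP; rewrite eqseq_rcons => /andP[/eqP -> /eqP Ea]; subst a.
  by exists (rcons u y1), y2; split=> //; right; exists u, x1, y1.
move=> E; exists (u ++ [:: y1; y2] ++ v'), z; rewrite -!rcons_cat; split=> //; left.
move: E; rewrite -!rcons_cat => /eqP; rewrite eqseq_rcons => /andP[/eqP -> /eqP ->].
by split.
Qed.

Lemma pstep_rcons n X a W : pstep n (rcons X a) W ->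
  exists V c, W = rcons V c /\ (c = a /\ pstep n X V \/ rel_at_end n X a V c).
Proof.
move EXa: (rcons X a) => w H; case: H EXa => u v l r Hlr EXa;
  have [x1 [x2 [y1 [y2 [El Er E1 E2 V12]]]]] := band_rel_lcompl Hlr; subst l r.
- by apply: rcons_pstep_cases EXa => // u' v'; apply: pstep_fwd.
- by apply: rcons_pstep_cases EXa; rewrite 1?andbC // => u' v'; apply: pstep_bwd.
Qed.

Lemma lcompl_rel_at_end n N X V Y a b c Z : lcompl_upto n N ->
  size V <= N -> pword n (rcons V c) -> valid_gen n b -> rel_at_end n X a V c ->
  peq n V (Z ++ lcompl c b) -> peq n Y (Z ++ lcompl b c) ->
  exists Z', peq n X (Z' ++ lcompl a b) /\ peq n Y (Z' ++ lcompl b a).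
Proof.
move=> HN szV HpV Vb [U [x [y [-> EV Eac Eca /andP[Va Vc]]]]] HV HY; subst V.
have [U' [W' [Z' [Er HU' HW']]]] := cube_condition_holds Va Vb Vc (congr1 size Eac).
rewrite pword_rcons in HpV; case/andP: HpV => HpV _.
rewrite -cats1 -Eca in szV HpV HV.
have [Z3 [HU HZ]] := lcompl_words_correct HN szV HpV HV Er.
exists (Z3 ++ Z'); split; rewrite -catA.
- rewrite -cats1 -Eac; apply: peq_trans (peq_catr _ HU) _.
  by rewrite -catA; apply: peq_catl.
- apply: peq_trans HY (peq_trans (peq_catr _ HZ) _).
  by rewrite -catA; apply: peq_catl.
Qed.

Lemma lcompl_upto_succ n N : lcompl_upto n N -> lcompl_upto n N.+1.
Proof.
move=> HN X Y a b szX HpX.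
move E1: (rcons X a) => w1; move E3: (rcons Y b) => w3 Hpq.
elim: Hpq X a E1 szX HpX E3 => [w | w1' w2 w3' Hs Hpq IH] X a E1 szX HpX E3.
  case/rcons_inj: (etrans E3 (esym E1)) => -> ->; exists X.
  by rewrite lcompl_id cats0; split; apply: peq_refl.
subst w1'; have [V [c [EV Hcase]]] := pstep_rcons Hs; subst w2.
have szV : size V = size X by have := pstep_size Hs; rewrite !size_rcons => -[].
have szVN : size V < N.+1 by rewrite szV.
have HpV : pword n (rcons V c) by rewrite -(pstep_pword Hs).
have [Z [HVZ HYZ]] := IH V c erefl szVN HpV E3.
case: Hcase => [[Eca HXV] | Hend].
  by subst c; exists Z; split=> //; apply: peq_step HXV HVZ.
have Vb : valid_gen n b by move: HpV; rewrite (peq_pword Hpq) -E3 pword_rcons => /andP[].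
exact: lcompl_rel_at_end HN szVN HpV Vb Hend HVZ HYZ.
Qed.

Lemma lcompl_upto_all n N : lcompl_upto n N.
Proof. by elim: N => [|N /lcompl_upto_succ //] X Y a b. Qed.

Lemma common_prefix_lcompl n X Y a b : pword n (rcons X a) ->
  peq n (rcons X a) (rcons Y b) -> common_prefix n X Y (lcompl a b) (lcompl b a).
Proof.
move=> HpX Hpq; have [Z [HX HY]] := @lcompl_upto_all n (size X).+1 X Y a b (ltnSn _) HpX Hpq.
exists Z; split=> //.
by move: HpX; rewrite pword_rcons (peq_pword HX) pword_cat => /andP[/andP[]].
Qed.

Lemma peq_commute n t s r q : valid_gen n (a t s) -> valid_gen n (a r q) ->
  commute_cond t s r q -> peq n [:: a t s; a r q] [:: a r q; a t s].
Proof. by move=> Vts Vrq h; apply/pstep_peq/(pstep_fwd [::] [::] (R1 Vts Vrq h)). Qed.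

Lemma common_prefix_peqr n X Y A B B' :
  common_prefix n X Y A B -> peq n B B' -> common_prefix n X Y A B'.
Proof.
case=> Z [HZ [HX HY]] HB; exists Z; split=> //; split=> //.
exact: peq_trans HY (peq_catl _ HB).
Qed.

Theorem theorem2p4 (n : nat) (X Y : seq gen) (t s r q : nat) :
  pword n X -> pword n Y ->
  1 <= s -> s < t -> t <= n ->
  1 <= q -> q < r -> r <= n ->
  peq n (rcons X (a t s)) (rcons Y (a r q)) ->
  (* (I) *)
  ((t = r /\ s = q) -> peq n X Y) /\
  (* (II) *)
  ((t = r /\ q < s) -> common_prefix n X Y [:: a t q] [:: a s q]) /\
  ((t = r /\ s < q) -> common_prefix n X Y [:: a q s] [:: a t s]) /\
  (t = q -> common_prefix n X Y [:: a r t] [:: a r s]) /\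
  (s = r -> common_prefix n X Y [:: a t q] [:: a t s]) /\
  ((s = q /\ r < t) -> common_prefix n X Y [:: a r s] [:: a t r]) /\
  ((s = q /\ t < r) -> common_prefix n X Y [:: a r t] [:: a t s]) /\
  (* (III) *)
  (commute_cond t s r q -> common_prefix n X Y [:: a r q] [:: a t s]) /\
  (* (IV) *)
  ((q < s /\ s < r /\ r < t) ->
     common_prefix n X Y [:: a t q; a r s] [:: a t r; a s q]) /\
  ((s < q /\ q < t /\ t < r) ->
     common_prefix n X Y [:: a r t; a q s] [:: a t q; a r s]).
Proof.
move=> HX _ hs hst htn hq hqr hrn Hpq.
have HpX : pword n (rcons X (a t s)) by rewrite pword_rcons HX /valid_gen /= hs hst htn.
have cp := common_prefix_lcompl HpX Hpq.
have cp_eq A B : lcompl (t, s) (r, q) = A -> lcompl (r, q) (t, s) = B ->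
  common_prefix n X Y A B by move=> <- <-.
rewrite /a; split.
  case=> Er Eq; move: cp; rewrite -Er -Eq lcompl_id => -[Z [_ [HXZ HYZ]]].
  by rewrite cats0 in HXZ HYZ; apply: peq_trans HXZ (peq_sym HYZ).
split; first by case=> Er h; subst r; apply: cp_eq; lcompl_compute.
split; first by case=> Er h; subst r; apply: cp_eq; lcompl_compute.
split; first by move=> Eq; subst q; apply: cp_eq; lcompl_compute.
split; first by move=> Er; subst r; apply: cp_eq; lcompl_compute.
split; first by case=> Eq h; subst q; apply: cp_eq; lcompl_compute.
split; first by case=> Eq h; subst q; apply: cp_eq; lcompl_compute.
split.
  rewrite commute_condE => h; apply: cp_eq; rewrite lcompl_commute //.
  by rewrite bands_commuteC.
split; first by move=> *; apply: cp_eq; lcompl_compute.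
move=> h; apply: common_prefix_peqr (cp_eq _ [:: (r, s); (t, q)] _ _) _; try lcompl_compute.
by apply: peq_commute; rewrite ?commute_condE; lcompl_compute.
Qed.
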